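(* For each $n\in\mathbb{N}$ let $P_n:C(B_n)\to\Pi_1(\mathbb{R}^n)$ be the interpolation projector whose nodes are the vertices of a regular simplex inscribed in the sphere $\{x:\|x\|=1\}$. Then $\|P_n\|_{B_n}\asymp\theta_n(B_n)$, i.e. there exist constants $c_1,c_2>0$ not depending on $n$ such that $c_1\theta_n(B_n)\le\|P_n\|_{B_n}\le c_2\theta_n(B_n)$ for all $n$.
   Context: $B_n=\{x\in\mathbb{R}^n:\|x\|\le1\}$ (Euclidean norm). $C(B_n)$ is the space of continuous real functions on $B_n$ with the max norm; $\Pi_1(\mathbb{R}^n)$ is the set of polynomials in $n$ variables of degree at most $1$. For a nondegenerate simplex $S\subset B_n$ with vertices $x^{(1)},\dots,x^{(n+1)}$, the corresponding interpolation projector $P:C(B_n)\to\Pi_1(\mathbb{R}^n)$ is defined by $Pf(x^{(j)})=f(x^{(j)})$, and $\|P\|_{B_n}$ is its operator norm on $C(B_n)$. $\theta_n(B_n)$ is the minimal value of $\|P\|_{B_n}$ over all nondegenerate simplices with vertices in $B_n$. *)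

From mathcomp Require Import all_boot all_order all_algebra.
From mathcomp Require Import all_classical all_reals all_analysis.
Import Order.TTheory GRing.Theory Num.Theory.
Import numFieldNormedType.Exports.
Local Open Scope ring_scope.
Local Open Scope classical_set_scope.

Section Defs.
Variable R : realType.

Definition enorm {n} (x : 'rV[R]_n) : R := Num.sqrt (\sum_(i < n) x 0 i ^+ 2).

Definition Bn (n : nat) : set 'rV[R]_n := [set x | enorm x <= 1].

(* A simplex in R^n is given by its n+1 vertices x j, j : 'I_n.+1.
   Its matrix A has rows (x j, 1); S is nondegenerate iff det A <> 0. *)
Definition simplex_mx {n} (x : 'I_n.+1 -> 'rV[R]_n) : 'M[R]_n.+1 :=
  \matrix_(j < n.+1, k < n.+1) (if @insub _ (fun m => (m < n)%N) _ (val k) is Some k' then x j 0 k' else 1).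

Definition nondegenerate {n} (x : 'I_n.+1 -> 'rV[R]_n) : Prop :=
  \det (simplex_mx x) != 0.

(* the polynomial of degree <= 1 with coefficients (a, b): y |-> a.y + b *)
Definition aff {n} (a : 'rV[R]_n) (b : R) (y : 'rV[R]_n) : R :=
  \sum_(i < n) a 0 i * y 0 i + b.

(* the polynomial (a,b) interpolates f at the vertices of the simplex,
   i.e. it is P f  *)
Definition interpolates {n} (x : 'I_n.+1 -> 'rV[R]_n) (f : 'rV[R]_n -> R)
  (a : 'rV[R]_n) (b : R) : Prop :=
  forall j, aff a b (x j) = f (x j).

(* ||P||_{B_n} = sup { ||P f||_{C(B_n)} : f in C(B_n), ||f||_{C(B_n)} <= 1 },
   written out pointwise: the sup of |Pf(y)| over y in B_n and such f. *)
Definition proj_norm {n} (x : 'I_n.+1 -> 'rV[R]_n) : R :=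
  sup [set t : R | exists (f : 'rV[R]_n -> R) (a : 'rV[R]_n) (b : R) (y : 'rV[R]_n),
         [/\ {within Bn n, continuous f},
             (forall z, Bn n z -> `|f z| <= 1),
             interpolates x f a b,
             Bn n y &
             t = `|aff a b y| ] ].

Definition theta (n : nat) : R :=
  inf [set t : R | exists x : 'I_n.+1 -> 'rV[R]_n,
         [/\ (forall j, Bn n (x j)), nondegenerate x & t = proj_norm x] ].

Definition regular_inscribed {n} (x : 'I_n.+1 -> 'rV[R]_n) : Prop :=
  [/\ nondegenerate x,
      (forall j, enorm (x j) = 1) &
      (forall i j k l, i != j -> k != l -> enorm (x i - x j) = enorm (x k - x l))].

End Defs.

(* Lower bound, for every nondegenerate simplex in B_n: let
   lambda_j = <A_j, .> + B_j be its Lagrange basis.  Along an edge, of length at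
   most 2, lambda_j rises by 1, so |A_j| >= 1/2.  For signs s_j maximising
   |S| with S = sum_j s_j A_j, flipping one sign shows
   |S|^2 >= sum_j |A_j|^2 >= (n+1)/4.  The affine function sum_j s_j lambda_j is
   +-1 at the vertices, hence equals Pf for f its clamp to [-1, 1], and it
   differs by 2|S| at the antipodal points +-S/|S|.  So ||P|| >= sqrt n / 2 for
   every simplex, and theta_n >= sqrt n / 2.
   Upper bound for the regular simplex: the Gram matrix of its vertices is
   1 on the diagonal and some g != 1 off it, so
   lambda_j(y) = (<x_j, y> - g) / (1 - g).  Since sum_j lambda_j = 1, the
   vertices sum to 0 and g = -1/n; the tight-frame identity
   sum_j <x_j, y>^2 = (n+1)/n |y|^2 then bounds sum_j |lambda_j(y)| by
   sqrt n + 1 on B_n.  Hence theta_n <= ||P_n|| <= sqrt n + 1 <= 4 theta_n. *)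

From Pilot Require Import Defs.
From mathcomp Require Import all_boot all_order all_algebra.
From mathcomp Require Import all_classical all_reals all_analysis.
From mathcomp Require Import ring lra.
Import Order.TTheory GRing.Theory Num.Theory.
Import numFieldNormedType.Exports.
Local Open Scope ring_scope.
Local Open Scope classical_set_scope.

Section InterpolationProjector.
Variable R : realType.

Definition clamp (t : R) : R := Num.min 1 (Num.max (-1) t).

Lemma clamp_continuous : continuous clamp.
Proof.
move=> t; apply: continuous_min; first exact: cst_continuous.
by apply: continuous_max; [exact: cst_continuous | exact: cvg_id].
Qed.

Lemma norm_clamp_le1 t : `|clamp t| <= 1.
Proof. by rewrite /clamp ler_norml ge_min le_min le_max !lexx /= andbT; lra. Qed.

Lemma clamp_id t : `|t| <= 1 -> clamp t = t.
Proof. by rewrite ler_norml => /andP[t_ge t_le]; rewrite /clamp (max_r t_ge) (min_r t_le). Qed.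

Lemma sum_delta_r (I : finType) (F : I -> R) k : \sum_j F j * (j == k)%:R = F k.
Proof.
by rewrite (bigD1 k) //= eqxx mulr1 big1 ?addr0 // => j /negPf ->; rewrite mulr0.
Qed.

Lemma sum_norm_le_amgm {I : finType} (t : I -> R) k :
  k * \sum_j `|t j| <= (k ^+ 2 * \sum_j t j ^+ 2 + #|I|%:R) / 2.
Proof.
rewrite mulr_sumr -sumr_const mulr_sumr -big_split mulr_suml /=.
apply: ler_sum => j _; rewrite -(real_normK (num_real (t j))).
have := sqr_ge0 (k * `|t j| - 1); lra.
Qed.

Section Euclidean.
Context {n : nat}.
Implicit Types (u v w a y : 'rV[R]_n).

Definition dot u v := \sum_(i < n) u 0 i * v 0 i.

Lemma dotC u v : dot u v = dot v u.
Proof. by apply: eq_bigr => i _; rewrite mulrC. Qed.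

Lemma dotDl u v w : dot (u + v) w = dot u w + dot v w.
Proof. by rewrite /dot -big_split; apply: eq_bigr => i _; rewrite mxE mulrDl. Qed.

Lemma dotZl c u w : dot (c *: u) w = c * dot u w.
Proof. by rewrite /dot mulr_sumr; apply: eq_bigr => i _; rewrite mxE mulrA. Qed.

Lemma dotNl u w : dot (- u) w = - dot u w.
Proof. by rewrite -scaleN1r dotZl mulN1r. Qed.

Lemma dot0l w : dot 0 w = 0.
Proof. by rewrite -(scale0r 0) dotZl mul0r. Qed.

Lemma dotDr u v w : dot w (u + v) = dot w u + dot w v.
Proof. by rewrite dotC dotDl !(dotC w). Qed.

Lemma dotZr c u w : dot w (c *: u) = c * dot w u.
Proof. by rewrite dotC dotZl dotC. Qed.

Lemma dotNr u w : dot w (- u) = - dot w u.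
Proof. by rewrite dotC dotNl dotC. Qed.

Lemma dot_suml (I : finType) (F : I -> 'rV[R]_n) w :
  dot (\sum_j F j) w = \sum_j dot (F j) w.
Proof.
by rewrite /dot exchange_big; apply: eq_bigr => i _; rewrite summxE mulr_suml.
Qed.

Lemma dot_sumr (I : finType) (F : I -> 'rV[R]_n) w :
  dot w (\sum_j F j) = \sum_j dot w (F j).
Proof. by rewrite dotC dot_suml; apply: eq_bigr => j _; rewrite dotC. Qed.

Lemma dot_ge0 u : 0 <= dot u u.
Proof. by apply: sumr_ge0 => i _; rewrite -expr2 sqr_ge0. Qed.

Lemma dot_eq0 u : dot u u = 0 -> u = 0.
Proof.
move=> /psumr_eq0P u0; apply/rowP => i; rewrite mxE.
have sqr_ge0' j : 0 <= u 0 j * u 0 j by rewrite -expr2 sqr_ge0.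
by have /eqP := u0 (fun j _ => sqr_ge0' j) i isT; rewrite mulf_eq0 orbb => /eqP.
Qed.

Lemma dot_selfD u v : dot (u + v) (u + v) = dot u u + 2 * dot u v + dot v v.
Proof. by rewrite !(dotDl, dotDr) (dotC v u); ring. Qed.

Lemma dot_selfB u v : dot (u - v) (u - v) = dot u u - 2 * dot u v + dot v v.
Proof. by rewrite dot_selfD dotNr dotNl dotNr opprK; ring. Qed.

Lemma normr_dot_le u v : `|dot u v| <= (dot u u + dot v v) / 2.
Proof.
have := dot_ge0 (u - v); have := dot_ge0 (u + v).
rewrite dot_selfD dot_selfB ler_norml => ? ?; apply/andP; split; lra.
Qed.

Lemma enormE u : enorm R u = Num.sqrt (dot u u).
Proof. by congr Num.sqrt; apply: eq_bigr => i _; rewrite expr2. Qed.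

Lemma BnE u : Bn R n u <-> dot u u <= 1.
Proof. by rewrite /Bn /= enormE -{1}sqrtr1 ler_sqrt. Qed.

Lemma affE a b y : aff R a b y = dot a y + b.
Proof. by []. Qed.

Lemma aff_continuous a b : continuous (aff R a b).
Proof.
rewrite /aff => y; apply: continuousD; last exact: cst_continuous.
apply: (@continuous_big R^o _ +%R 0 xpredT add_continuous) => i _ z.
exact: (@cvgMl_tmp _ _ _ _ _ (a 0 i) _ (@coord_continuous R 1 n 0 i z)).
Qed.

Lemma aff_sum (I : finType) (c : I -> R) (A : I -> 'rV[R]_n) (B : I -> R) y :
  aff R (\sum_j c j *: A j) (\sum_j c j * B j) y = \sum_j c j * aff R (A j) (B j) y.
Proof.
by rewrite affE dot_suml -big_split; apply: eq_bigr => j _; rewrite dotZl mulrDr.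
Qed.

Lemma norm_aff_le a b y : Bn R n y -> `|aff R a b y| <= (dot a a + 1) / 2 + `|b|.
Proof.
move=> /BnE y_le1; rewrite affE; apply: le_trans (ler_normD _ _) _.
by rewrite lerD2r; apply: le_trans (normr_dot_le a y) _; lra.
Qed.

End Euclidean.

Section Interpolation.
Context {n : nat}.

(* The coefficients of y |-> a.y + b, in the column layout of [simplex_mx]. *)
Definition coefv (a : 'rV[R]_n) (b : R) : 'cV[R]_n.+1 :=
  \col_k (if @insub _ (fun m => (m < n)%N) _ (val k) is Some k' then a 0 k' else b).

Lemma simplex_mx_coefv (x : 'I_n.+1 -> 'rV[R]_n) a b j :
  (simplex_mx R x *m coefv a b) j 0 = aff R a b (x j).
Proof.
rewrite !mxE big_ord_recr /= !mxE insubN ?ltnn // mul1r affE; congr (_ + _).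
by apply: eq_bigr => i _; rewrite !mxE /= valK mulrC.
Qed.

Lemma coefv_surj (c : 'cV[R]_n.+1) : exists a b, coefv a b = c.
Proof.
exists (\row_i c (widen_ord (leqnSn n) i) 0), (c ord_max 0).
apply/colP => k; rewrite mxE; case: insubP => [k' _ kk'|k_ge].
  by rewrite mxE; congr (c _ _); apply: val_inj.
congr (c _ _); apply: val_inj => /=; move: (ltn_ord k) k_ge; rewrite ltnS.
by case: ltngtP.
Qed.

Lemma coefv_inj a b a' b' : coefv a b = coefv a' b' -> a = a' /\ b = b'.
Proof.
move=> /colP eq_ab; split; last by have := eq_ab ord_max; rewrite !mxE /= insubN ?ltnn.
by apply/rowP => j; have := eq_ab (widen_ord (leqnSn n) j); rewrite !mxE /= valK.
Qed.

Variables (x : 'I_n.+1 -> 'rV[R]_n).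
Hypothesis nd : Defs.nondegenerate R x.

Let simplex_mx_unit : simplex_mx R x \in unitmx.
Proof. by rewrite unitmxE unitfE. Qed.

Lemma interpolant_exists (v : 'I_n.+1 -> R) :
  exists a b, forall j, aff R a b (x j) = v j.
Proof.
have [a [b ab_def]] := coefv_surj (invmx (simplex_mx R x) *m \col_j v j).
by exists a, b => j; rewrite -simplex_mx_coefv ab_def mulKVmx // mxE.
Qed.

Lemma interpolant_unique {a b a' b'} :
  (forall j, aff R a b (x j) = aff R a' b' (x j)) -> a = a' /\ b = b'.
Proof.
move=> eq_ab; apply: coefv_inj.
have : simplex_mx R x *m coefv a b = simplex_mx R x *m coefv a' b'.
  by apply/colP => j; rewrite !simplex_mx_coefv.
by move/(congr1 (mulmx (invmx (simplex_mx R x)))); rewrite !mulKmx.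
Qed.

Definition lagrange_basis (A : 'I_n.+1 -> 'rV[R]_n) (B : 'I_n.+1 -> R) :=
  forall j k, aff R (A j) (B j) (x k) = (j == k)%:R.

Lemma lagrange_basis_exists : exists A B, lagrange_basis A B.
Proof.
have lagrange_poly j : exists p : 'rV[R]_n * R, forall k, aff R p.1 p.2 (x k) = (j == k)%:R.
  by have [a [b ab_spec]] := interpolant_exists (fun k => (j == k)%:R); exists (a, b).
have [AB AB_spec] := boolp.choice lagrange_poly.
by exists (fun j => (AB j).1), (fun j => (AB j).2).
Qed.

Variables (A : 'I_n.+1 -> 'rV[R]_n) (B : 'I_n.+1 -> R).
Hypothesis AB_basis : lagrange_basis A B.

Lemma lagrange_interpolant {f a b} : interpolates R x f a b ->
  forall y, aff R a b y = \sum_j f (x j) * aff R (A j) (B j) y.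
Proof.
move=> f_ab y.
have [-> ->] : a = \sum_j f (x j) *: A j /\ b = \sum_j f (x j) * B j.
  apply: interpolant_unique => k; rewrite f_ab aff_sum.
  by under eq_bigr do rewrite AB_basis; rewrite sum_delta_r.
exact: aff_sum.
Qed.

Lemma lagrange_partition_unity : \sum_j A j = 0 /\ \sum_j B j = 1.
Proof.
have unity k : aff R (\sum_j 1 *: A j) (\sum_j 1 * B j) (x k) = aff R 0 1 (x k).
  rewrite aff_sum affE dot0l add0r -[RHS](@sum_delta_r _ (fun=> 1) k).
  by apply: eq_bigr => j _; rewrite AB_basis.
have [sumA sumB] := interpolant_unique unity.
by split; [rewrite -[RHS]sumA | rewrite -[RHS]sumB]; apply: eq_bigr => j _; rewrite (scale1r, mul1r).
Qed.

Lemma norm_interpolant_le {f a b} y : interpolates R x f a b ->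
  (forall j, `|f (x j)| <= 1) -> `|aff R a b y| <= \sum_j `|aff R (A j) (B j) y|.
Proof.
move=> f_ab f_le1; rewrite (lagrange_interpolant f_ab).
apply: le_trans (ler_norm_sum _ _ _) _; apply: ler_sum => j _.
by rewrite normrM ler_piMl.
Qed.

End Interpolation.

Arguments lagrange_basis_exists {n x}.
Arguments lagrange_interpolant {n x} nd {A B} AB_basis {f a b}.
Arguments lagrange_partition_unity {n x} nd {A B}.
Arguments norm_interpolant_le {n x} nd {A B} AB_basis {f a b}.

Section ProjectorNorm.
Context {n : nat} (x : 'I_n.+1 -> 'rV[R]_n).
Hypotheses (nd : Defs.nondegenerate R x) (x_in_Bn : forall j, Bn R n (x j)).

Definition proj_values := [set t : R | exists f a b (y : 'rV[R]_n),
  [/\ {within Bn R n, continuous f}, (forall z, Bn R n z -> `|f z| <= 1),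
      interpolates R x f a b, Bn R n y & t = `|aff R a b y| ] ].

Lemma proj_normE : proj_norm R x = sup proj_values.
Proof. by []. Qed.

Lemma proj_values_neq0 : proj_values !=set0.
Proof.
exists `|aff R 0 0 (0 : 'rV[R]_n)|, (fun=> 0), 0, 0, 0; split => //.
- exact/continuous_subspaceT/cst_continuous.
- by move=> z _; rewrite normr0 ler01.
- by move=> j; rewrite affE dot0l addr0.
- by apply/BnE; rewrite dot0l ler01.
Qed.

Lemma proj_values_ubound {A B C} : lagrange_basis x A B ->
  (forall y, Bn R n y -> \sum_j `|aff R (A j) (B j) y| <= C) -> ubound proj_values C.
Proof.
move=> AB_basis sum_le _ [f [a [b [y [_ f_le1 f_ab y_in ->]]]]].
apply: le_trans (sum_le y y_in).
exact: (norm_interpolant_le nd AB_basis y f_ab (fun j => f_le1 _ (x_in_Bn j))).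
Qed.

Lemma proj_norm_le {A B C} : lagrange_basis x A B ->
  (forall y, Bn R n y -> \sum_j `|aff R (A j) (B j) y| <= C) -> proj_norm R x <= C.
Proof.
move=> AB_basis sum_le; rewrite proj_normE.
exact: (ge_sup proj_values_neq0 (proj_values_ubound AB_basis sum_le)).
Qed.

Lemma proj_norm_ge f a b y : {within Bn R n, continuous f} ->
  (forall z, Bn R n z -> `|f z| <= 1) -> interpolates R x f a b -> Bn R n y ->
  `|aff R a b y| <= proj_norm R x.
Proof.
move=> f_cont f_le1 f_ab y_in; rewrite proj_normE; apply: sup_upper_bound; last first.
  by exists f, a, b, y.
split; first exact: proj_values_neq0.
have [A [B AB_basis]] := lagrange_basis_exists nd.
exists (\sum_j ((dot (A j) (A j) + 1) / 2 + `|B j|)).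
apply: (proj_values_ubound AB_basis) => y' y'_in.
by apply: ler_sum => j _; apply: norm_aff_le.
Qed.

Lemma proj_norm_ge_grad a b : (forall j, `|aff R a b (x j)| <= 1) ->
  Num.sqrt (dot a a) <= proj_norm R x.
Proof.
move=> ab_le1; pose f y := clamp (aff R a b y).
have f_cont : {within Bn R n, continuous f}.
  apply: continuous_subspaceT => y.
  exact: continuous_comp (aff_continuous a b y) (clamp_continuous _).
have f_le1 z : Bn R n z -> `|f z| <= 1 by move=> _; apply: norm_clamp_le1.
have f_ab : interpolates R x f a b by move=> j; rewrite /f clamp_id.
have Pf_le y : Bn R n y -> `|aff R a b y| <= proj_norm R x by apply: proj_norm_ge.
set r := Num.sqrt (dot a a); have [r0|r_neq0] := eqVneq r 0.
  by rewrite r0; apply: le_trans (Pf_le 0 _); rewrite ?normr_ge0 // BnE dot0l ler01.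
have r_gt0 : 0 < r by rewrite lt_neqAle eq_sym r_neq0 sqrtr_ge0.
have r2 : r ^+ 2 = dot a a by rewrite sqr_sqrtr // dot_ge0.
pose u := r^-1 *: a.
have u_in : Bn R n u.
  by rewrite BnE dotZl dotZr -r2 (_ : _ * _ = 1) //; field.
have mu_in : Bn R n (- u) by rewrite BnE dotNl dotNr opprK -BnE.
have rise : aff R a b u - aff R a b (- u) = 2 * r.
  by rewrite !affE dotNr dotZr -r2; field.
have := ler_normD (aff R a b u) (- aff R a b (- u)).
rewrite rise normrN ger0_norm; last by rewrite mulr_ge0 // ltW.
have := Pf_le _ u_in; have := Pf_le _ mu_in; lra.
Qed.

End ProjectorNorm.

Arguments proj_norm_le {n x} nd x_in_Bn {A B C}.
Arguments proj_norm_ge_grad {n x} nd x_in_Bn {a b}.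

Lemma exists_signs_dot_ge {n} {I : finType} (A : I -> 'rV[R]_n) :
  exists s : {ffun I -> bool}, \sum_j dot (A j) (A j) <=
    dot (\sum_j (-1) ^+ s j *: A j) (\sum_j (-1) ^+ s j *: A j).
Proof.
pose S (s : {ffun I -> bool}) := \sum_j (-1) ^+ s j *: A j.
have [s _ s_max] := @arg_maxP _ _ _ [ffun=> true] xpredT (fun s => dot (S s) (S s)) isT.
exists s; rewrite -/(S s) [X in dot _ X]/S dot_sumr; apply: ler_sum => k _.
(* Flipping the sign of [A k] cannot increase [dot (S s) (S s)]. *)
pose s' := [ffun j => s j (+) (j == k)].
have S_flip : S s' = S s - (2 * (-1) ^+ s k) *: A k.
  rewrite /S (bigD1 k) //= [in RHS](bigD1 k) //= ffunE eqxx addrAC -scalerBl.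
  congr (_ *: _ + _); first by case: (s k); rewrite /= ?expr0 ?expr1; ring.
  by apply: eq_bigr => j /negPf j_neq_k; rewrite ffunE j_neq_k addbF.
have := s_max s' isT; rewrite /= S_flip dot_selfB !(dotZl, dotZr).
by case: (s k); rewrite /= ?expr0 ?expr1; lra.
Qed.

Section LowerBound.
Context {n : nat} (x : 'I_n.+1 -> 'rV[R]_n).
Hypotheses (n_gt0 : (0 < n)%N) (x_in_Bn : forall j, Bn R n (x j)).

(* [aff (A j) (B j)] rises by 1 along an edge of length at most 2. *)
Lemma lagrange_grad_ge {A B} : lagrange_basis x A B -> forall j, 4^-1 <= dot (A j) (A j).
Proof.
move=> AB_basis j.
have [l j_neq_l] : exists l, j != l.
  have [->|j_neq0] := eqVneq j ord0; last by exists ord0.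
  by exists ord_max; rewrite -(inj_eq val_inj) /= eq_sym -lt0n.
set v := x j - x l.
have Av : dot (A j) v = 1.
  have := AB_basis j j; have := AB_basis j l.
  by rewrite /v dotDr dotNr !affE eqxx (negbTE j_neq_l) /=; lra.
have v_le : dot v v <= 4.
  have := dot_ge0 (x j + x l); have /BnE := x_in_Bn j; have /BnE := x_in_Bn l.
  by rewrite /v dot_selfB dot_selfD; lra.
have := dot_ge0 (A j - 4^-1 *: v); rewrite dot_selfB !(dotZl, dotZr) Av; lra.
Qed.

Lemma proj_norm_ge_sqrt : Defs.nondegenerate R x -> Num.sqrt n%:R / 2 <= proj_norm R x.
Proof.
move=> nd; have [A [B AB_basis]] := lagrange_basis_exists nd.
have [s S_ge] := exists_signs_dot_ge A.
set S := \sum_j (-1) ^+ s j *: A j in S_ge; pose b := \sum_j (-1) ^+ s j * B j.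
have Sb_le1 k : `|aff R S b (x k)| <= 1.
  rewrite aff_sum; under eq_bigr do rewrite AB_basis.
  by rewrite sum_delta_r normr_sign.
apply: le_trans _ (proj_norm_ge_grad nd x_in_Bn Sb_le1).
have S_ge' : n%:R / 4 <= dot S S.
  apply: le_trans S_ge; apply: le_trans _ (ler_sum _ (fun j _ => lagrange_grad_ge AB_basis j)).
  by rewrite sumr_const card_ord mulrS -[_ *+ n]mulr_natr; have := ler0n R n; lra.
rewrite -[X in X <= _]ger0_norm ?divr_ge0 ?sqrtr_ge0 // -sqrtr_sqr ler_sqrt ?dot_ge0 //.
by rewrite exprMn sqr_sqrtr // (_ : 2^-1 ^+ 2 = 4^-1) //; field.
Qed.

End LowerBound.

Lemma unit_sphere_dot {n} (u : 'rV[R]_n) : enorm R u = 1 -> dot u u = 1.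
Proof. by rewrite enormE => u1; rewrite -[LHS]sqr_sqrtr ?dot_ge0 // u1 expr1n. Qed.

Lemma regular_inscribed_gram {n} {x : 'I_n.+1 -> 'rV[R]_n} :
  (0 < n)%N -> regular_inscribed R x ->
  exists2 g, g != 1 & forall i j, dot (x i) (x j) = if i == j then 1 else g.
Proof.
move=> n_gt0 [nd x_unit edges_eq].
have x1 j : dot (x j) (x j) = 1 by apply: unit_sphere_dot.
have first_neq_last : ord0 != ord_max :> 'I_n.+1.
  by rewrite -(inj_eq val_inj) /= eq_sym -lt0n.
have gram i j : i != j -> dot (x i) (x j) = dot (x ord0) (x ord_max).
  move=> i_neq_j; have := edges_eq _ _ _ _ i_neq_j first_neq_last.
  rewrite !enormE => /eqP; rewrite eqr_sqrt ?dot_ge0 // !dot_selfB !x1 => /eqP; lra.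
exists (dot (x ord0) (x ord_max)); last first.
  by move=> i j; case: eqVneq => [<-|/gram //]; apply: x1.
apply: contraNneq nd => g1.
have x_eq : x ord0 = x ord_max.
  by apply/eqP; rewrite -subr_eq0; apply/eqP/dot_eq0; rewrite dot_selfB !x1 g1; lra.
apply/eqP; rewrite (determinant_alternate first_neq_last) // => k.
by rewrite !mxE x_eq.
Qed.

Section RegularSimplex.
Context {n : nat} (x : 'I_n.+1 -> 'rV[R]_n) (g : R).
Hypotheses (n_gt0 : (0 < n)%N) (nd : Defs.nondegenerate R x) (g_neq1 : g != 1).
Hypothesis x_gram : forall i j, dot (x i) (x j) = if i == j then 1 else g.

Let alpha := (1 - g)^-1.
Let beta := - g * alpha.

Lemma regular_lagrange_basis : lagrange_basis x (fun j => alpha *: x j) (fun=> beta).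
Proof.
have g1 : 1 - g != 0 by rewrite subr_eq0 eq_sym.
by move=> j k; rewrite affE dotZl x_gram /beta /alpha; case: eqVneq => _ /=; field.
Qed.

Lemma regular_vertices_sum : \sum_j x j = 0.
Proof.
have [/eqP sumA _] := lagrange_partition_unity nd regular_lagrange_basis.
move: sumA; rewrite -scaler_sumr scaler_eq0 invr_eq0 subr_eq0 eq_sym.
by rewrite (negbTE g_neq1) => /eqP.
Qed.

Lemma regular_offset : beta = n.+1%:R^-1.
Proof.
have [_ sumB] := lagrange_partition_unity nd regular_lagrange_basis.
have nS_neq0 : n.+1%:R != 0 :> R by rewrite pnatr_eq0.
by apply: (mulIf nS_neq0); rewrite mulVf // mulr_natr -sumB sumr_const card_ord.
Qed.

Lemma regular_scale : alpha * n.+1%:R = n%:R.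
Proof.
have -> : alpha = 1 - beta by rewrite /beta /alpha; field; rewrite subr_eq0 eq_sym.
by rewrite regular_offset mulrBl mulVf ?pnatr_eq0 // mul1r -natr1 addrK.
Qed.

Lemma regular_frame z : dot z z = alpha * \sum_j dot z (x j) ^+ 2.
Proof.
have z_interp : interpolates R x (aff R z 0) z 0 by [].
rewrite -[LHS]addr0 -affE (lagrange_interpolant nd regular_lagrange_basis z_interp).
transitivity (\sum_j (alpha * dot z (x j) ^+ 2 + beta * dot z (x j))).
  by apply: eq_bigr => j _; rewrite !affE addr0 dotZl (dotC (x j)); ring.
by rewrite big_split /= -!mulr_sumr -dot_sumr regular_vertices_sum dotC dot0l mulr0 addr0.
Qed.

Lemma regular_lagrange_sum_le y : Bn R n y ->
  \sum_j `|aff R (alpha *: x j) beta y| <= Num.sqrt n%:R + 1.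
Proof.
move=> /BnE y_le1.
have beta_gt0 : 0 < beta by rewrite regular_offset invr_gt0 ltr0n.
have alpha_gt0 : 0 < alpha.
  by have := regular_scale; rewrite -(pmulr_lgt0 _ (ltr0Sn R n)) => ->; rewrite ltr0n.
pose t j := dot y (x j).
have term_le j : `|aff R (alpha *: x j) beta y| <= alpha * `|t j| + beta.
  rewrite affE dotZl dotC; apply: le_trans (ler_normD _ _) _.
  by rewrite normrM (gtr0_norm alpha_gt0) (gtr0_norm beta_gt0).
apply: le_trans (ler_sum _ (fun j _ => term_le j)) _.
rewrite big_split /= sumr_const card_ord -[_ *+ n.+1]mulr_natr regular_offset.
rewrite mulVf ?pnatr_eq0 // lerD2r -mulr_sumr.
set k := Num.sqrt n%:R; have k_gt0 : 0 < k by rewrite sqrtr_gt0 ltr0n.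
have k2 : k ^+ 2 = n%:R by rewrite sqr_sqrtr ?ler0n.
have := sum_norm_le_amgm t k; rewrite card_ord k2.
have := regular_frame y; have := regular_scale; rewrite -/t; nra.
Qed.

Lemma regular_proj_norm_le : proj_norm R x <= Num.sqrt n%:R + 1.
Proof.
have x_in_Bn j : Bn R n (x j) by rewrite BnE x_gram eqxx.
exact (proj_norm_le nd x_in_Bn regular_lagrange_basis regular_lagrange_sum_le).
Qed.

End RegularSimplex.

Arguments regular_proj_norm_le {n x g}.

Lemma regular_inscribed_proj_norm_le {n} {x : 'I_n.+1 -> 'rV[R]_n} :
  (0 < n)%N -> regular_inscribed R x -> proj_norm R x <= Num.sqrt n%:R + 1.
Proof.
move=> n_gt0 x_reg; have [g g_neq1 x_gram] := regular_inscribed_gram n_gt0 x_reg.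
by case: x_reg => nd _ _; apply: regular_proj_norm_le n_gt0 nd g_neq1 x_gram.
Qed.

Section Theta.
Context {n : nat} (x : 'I_n.+1 -> 'rV[R]_n).
Hypotheses (n_gt0 : (0 < n)%N) (x_in_Bn : forall j, Bn R n (x j)).
Hypothesis nd : Defs.nondegenerate R x.

Let admissible_norms := [set t : R | exists y : 'I_n.+1 -> 'rV[R]_n,
  [/\ (forall j, Bn R n (y j)), Defs.nondegenerate R y & t = proj_norm R y] ].

Let admissible_norms_lbound : lbound admissible_norms (Num.sqrt n%:R / 2).
Proof. by move=> _ [y [y_in_Bn y_nd ->]]; apply: proj_norm_ge_sqrt. Qed.

Lemma theta_le_proj_norm : theta R n <= proj_norm R x.
Proof.
apply: ge_inf; first by exists (Num.sqrt n%:R / 2); apply: admissible_norms_lbound.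
by exists x.
Qed.

Lemma sqrt_half_le_theta : Num.sqrt n%:R / 2 <= theta R n.
Proof. by apply: lb_le_inf admissible_norms_lbound; exists (proj_norm R x), x. Qed.

End Theta.

End InterpolationProjector.

Theorem corollary5 (R : realType) :
  exists c1 c2 : R, [/\ 0 < c1, 0 < c2 &
    forall (n : nat) (x : 'I_n.+1 -> 'rV[R]_n), (0 < n)%N ->
      regular_inscribed R x ->
      c1 * theta R n <= proj_norm R x <= c2 * theta R n].
Proof.
exists 1, 4; split=> // n x n_gt0 x_reg.
have x_in_Bn j : Bn R n (x j).
  by case: x_reg => _ x_unit _; rewrite BnE unit_sphere_dot.
have nd : Defs.nondegenerate R x by case: x_reg.
have theta_le := theta_le_proj_norm R x n_gt0 x_in_Bn nd.
have theta_ge := sqrt_half_le_theta R x n_gt0 x_in_Bn nd.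
have proj_le := regular_inscribed_proj_norm_le R n_gt0 x_reg.
have sqrt_ge1 : 1 <= Num.sqrt n%:R :> R.
  by rewrite -[X in X <= _]sqrtr1 ler_sqrt ?ler0n // ler1n.
by rewrite mul1r theta_le /=; lra.
Qed.
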